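(* For every positive integer $n$ there exists an addition chain producing $2^n-1$ whose length $\delta(2^n-1)$ satisfies $$\delta(2^n-1)\leq 2n-1-2\left\lfloor \frac{n-1}{2^{\lfloor \frac{\log n}{\log 2}\rfloor}}\right\rfloor+\left\lfloor \frac{\log n}{\log 2}\right\rfloor.$$
   Context: An addition chain producing $N$ is a sequence $1,2,s_3,\ldots,s_k=N$ (or just $1$ for $N=1$) in which every term after the first is the sum of two (not necessarily distinct) earlier terms; its length is the number of terms excluding the initial $1$. $\lfloor\cdot\rfloor$ is the floor function and $\log$ the natural logarithm. *)

From Stdlib Require Import Reals Lia List.
Import ListNotations.

(* It produces N if its last term is N; its length is the
   number of terms excluding the initial 1, i.e. length c - 1. *)
Definition is_addition_chain (c : list nat) : Prop :=
  nth 0 c 0 = 1%nat /\ (1 <= length c)%nat /\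
  forall i, (1 <= i < length c)%nat ->
    exists j k, (j < i)%nat /\ (k < i)%nat /\
      nth i c 0 = (nth j c 0 + nth k c 0)%nat.

Definition chain_produces (c : list nat) (N : nat) : Prop :=
  last c 0 = N.

Definition chain_length (c : list nat) : nat := (length c - 1)%nat.

Definition floorR (x : R) : Z := Int_part x.

(* The double-and-add chain 1, 2, 3, 6, 7, ..., 2^n - 2, 2^n - 1 has length
   2n - 2, and it already meets the bound: with L = floor(log2 n) we have
   n < 2^(L+1), so floor((n-1)/2^L) is at most 1, and it is 0 when L = 0
   (that is, n = 1).  Hence the right-hand side is always at least 2n - 2. *)

From Stdlib Require Import Reals ZArith List Lia Lra.
Open Scope R_scope.

Lemma nth_map_seq (f : nat -> nat) (m i : nat) :
  (i < m)%nat -> nth i (map f (seq 0 m)) 0%nat = f i.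
Proof.
  intros Him.
  rewrite nth_indep with (d' := f 0%nat) by (rewrite length_map, length_seq; lia).
  rewrite map_nth, seq_nth by lia.
  reflexivity.
Qed.

Lemma last_map_seq (f : nat -> nat) (m : nat) :
  last (map f (seq 0 (S m))) 0%nat = f m.
Proof. rewrite seq_S, map_app. apply last_last. Qed.

Lemma map_seq_addition_chain (f : nat -> nat) (m : nat) :
  f 0%nat = 1%nat -> (1 <= m)%nat ->
  (forall i, (1 <= i < m)%nat ->
     exists j k, (j < i)%nat /\ (k < i)%nat /\ f i = (f j + f k)%nat) ->
  is_addition_chain (map f (seq 0 m)).
Proof.
  intros Hf0 Hm Hstep.
  split; [|split].
  - rewrite nth_map_seq by lia. exact Hf0.
  - rewrite length_map, length_seq. exact Hm.
  - intros i Hi. rewrite length_map, length_seq in Hi.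
    destruct (Hstep i Hi) as (j & k & Hj & Hk & Hi_sum).
    exists j, k. rewrite !nth_map_seq by lia. auto.
Qed.

Definition mersenne_chain_term (i : nat) : nat :=
  if Nat.even i then (2 ^ (i / 2 + 1) - 1)%nat
  else (2 * (2 ^ (i / 2 + 1) - 1))%nat.

Lemma mersenne_chain_term_even (t : nat) :
  mersenne_chain_term (2 * t) = (2 ^ (t + 1) - 1)%nat.
Proof.
  unfold mersenne_chain_term.
  rewrite Nat.even_even, Nat.mul_comm, Nat.div_mul by lia.
  reflexivity.
Qed.

Lemma mersenne_chain_term_odd (t : nat) :
  mersenne_chain_term (2 * t + 1) = (2 * (2 ^ (t + 1) - 1))%nat.
Proof.
  unfold mersenne_chain_term.
  rewrite Nat.even_add, Nat.even_even.
  replace ((2 * t + 1) / 2)%nat with t by (apply Nat.div_unique with 1%nat; lia).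
  reflexivity.
Qed.

Lemma mersenne_chain_term_step (i : nat) : (1 <= i)%nat ->
  exists j k, (j < i)%nat /\ (k < i)%nat /\
    mersenne_chain_term i = (mersenne_chain_term j + mersenne_chain_term k)%nat.
Proof.
  intros Hi.
  destruct (Nat.Even_or_Odd i) as [[t ->] | [t ->]].
  - exists (2 * (t - 1) + 1)%nat, 0%nat.
    split; [lia | split; [lia |]].
    rewrite mersenne_chain_term_even, mersenne_chain_term_odd.
    change (mersenne_chain_term 0) with 1%nat.
    replace (t + 1)%nat with (S (t - 1 + 1)) by lia.
    pose proof (Nat.pow_nonzero 2 (t - 1 + 1)).
    rewrite Nat.pow_succ_r'. simpl. lia.
  - exists (2 * t)%nat, (2 * t)%nat.
    split; [lia | split; [lia |]].
    rewrite mersenne_chain_term_odd, mersenne_chain_term_even. lia.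
Qed.

Definition mersenne_chain (n : nat) : list nat :=
  map mersenne_chain_term (seq 0 (2 * n - 1)).

Lemma mersenne_chain_is_addition_chain (n : nat) :
  (1 <= n)%nat -> is_addition_chain (mersenne_chain n).
Proof.
  intros Hn. apply map_seq_addition_chain; [reflexivity | lia |].
  intros i Hi. apply mersenne_chain_term_step. lia.
Qed.

Lemma mersenne_chain_produces (n : nat) :
  (1 <= n)%nat -> chain_produces (mersenne_chain n) (2 ^ n - 1)%nat.
Proof.
  intros Hn. unfold chain_produces, mersenne_chain.
  replace (2 * n - 1)%nat with (S (2 * (n - 1))) by lia.
  rewrite last_map_seq, mersenne_chain_term_even.
  f_equal. f_equal. lia.
Qed.

Lemma mersenne_chain_length (n : nat) :
  chain_length (mersenne_chain n) = (2 * n - 2)%nat.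
Proof.
  unfold chain_length, mersenne_chain. rewrite length_map, length_seq. lia.
Qed.

Lemma floorR_INR_div (m d : nat) : (0 < d)%nat ->
  floorR (INR m / INR d) = Z.of_nat (m / d).
Proof.
  intros Hd. symmetry. apply Int_part_spec.
  assert (Hdpos : 0 < INR d) by (apply lt_0_INR; exact Hd).
  assert (Hm : INR m = INR d * INR (m / d) + INR (m mod d)).
  { rewrite <- mult_INR, <- plus_INR. f_equal. apply Nat.div_mod. lia. }
  assert (Hr : INR (m mod d) < INR d) by (apply lt_INR, Nat.mod_upper_bound; lia).
  assert (Hsplit : INR m / INR d = INR (m / d) + INR (m mod d) / INR d)
    by (rewrite Hm; field; lra).
  assert (Hfrac : 0 <= INR (m mod d) / INR d < 1).
  { split.
    - apply Rmult_le_pos; [apply pos_INR | left; apply Rinv_0_lt_compat, Hdpos].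
    - apply Rmult_lt_reg_r with (INR d); [exact Hdpos |].
      unfold Rdiv. rewrite Rmult_assoc, Rinv_l, Rmult_1_r, Rmult_1_l; lra. }
  rewrite <- INR_IZR_INZ, Hsplit. lra.
Qed.

Lemma floorR_nonneg (x : R) : 0 <= x -> (0 <= floorR x)%Z.
Proof.
  intros Hx. destruct (base_Int_part x) as [_ Hlt].
  assert (Hfl : -1 < IZR (floorR x)) by (unfold floorR; lra).
  apply lt_IZR in Hfl. lia.
Qed.

Lemma lt_INR_succ_floorR (x : R) : 0 <= x -> x < INR (S (Z.to_nat (floorR x))).
Proof.
  intros Hx. rewrite S_INR, INR_IZR_INZ, Z2Nat.id by (apply floorR_nonneg; exact Hx).
  destruct (base_Int_part x). unfold floorR. lra.
Qed.

Lemma ln_div_ln2_nonneg (n : nat) : (1 <= n)%nat -> 0 <= ln (INR n) / ln 2.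
Proof.
  intros Hn. apply Rmult_le_pos.
  - rewrite <- ln_1.
    destruct (Rle_lt_or_eq_dec 1 (INR n)) as [Hlt | <-];
      [apply (le_INR 1), Hn | left; apply ln_increasing; lra | right; reflexivity].
  - left. apply Rinv_0_lt_compat. rewrite <- ln_1. apply ln_increasing; lra.
Qed.

Lemma lt_pow2_of_ln_div_ln2_lt (n k : nat) : (1 <= n)%nat ->
  ln (INR n) / ln 2 < INR k -> (n < 2 ^ k)%nat.
Proof.
  intros Hn Hlt.
  assert (Hln2 : 0 < ln 2) by (rewrite <- ln_1; apply ln_increasing; lra).
  apply INR_lt. rewrite pow_INR. replace (INR 2) with 2 by (simpl; lra).
  apply ln_lt_inv; [apply (lt_INR 0); lia | apply pow_lt; lra |].
  rewrite ln_pow by lra.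
  apply Rmult_lt_compat_r with (r := ln 2) in Hlt; [| exact Hln2].
  unfold Rdiv in Hlt. rewrite Rmult_assoc, Rinv_l in Hlt by lra. lra.
Qed.

Lemma double_div_pow2_le (n k : nat) : (1 <= n)%nat -> (n < 2 ^ S k)%nat ->
  (2 * ((n - 1) / 2 ^ k) <= S k)%nat.
Proof.
  intros Hn Hnk. destruct k as [| k].
  - replace n with 1%nat by (simpl in Hnk; lia). simpl. lia.
  - assert ((n - 1) / 2 ^ S k < 2)%nat.
    { apply Nat.Div0.div_lt_upper_bound. rewrite Nat.pow_succ_r' in Hnk. lia. }
    lia.
Qed.

Theorem mainTheorem10 (n : nat) : (1 <= n)%nat ->
  exists c : list nat,
    is_addition_chain c /\ chain_produces c (2 ^ n - 1)%nat /\
    let L := floorR (ln (INR n) / ln 2) in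
    (Z.of_nat (chain_length c) <=
       2 * Z.of_nat n - 1
       - 2 * floorR (INR (n - 1) / 2 ^ (Z.to_nat L))
       + L)%Z.
Proof.
  intros Hn. exists (mersenne_chain n).
  split; [apply mersenne_chain_is_addition_chain, Hn |].
  split; [apply mersenne_chain_produces, Hn |].
  cbv zeta. rewrite mersenne_chain_length.
  pose proof (ln_div_ln2_nonneg n Hn) as Hlog.
  set (L := floorR (ln (INR n) / ln 2)) in *.
  set (k := Z.to_nat L).
  assert (HkL : Z.of_nat k = L) by (apply Z2Nat.id, floorR_nonneg, Hlog).
  assert (Hn_lt : (n < 2 ^ S k)%nat)
    by (apply lt_pow2_of_ln_div_ln2_lt; [exact Hn | apply lt_INR_succ_floorR, Hlog]).
  replace (2 ^ k) with (INR (2 ^ k)) by (rewrite pow_INR; reflexivity).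
  rewrite floorR_INR_div by (apply Nat.neq_0_lt_0, Nat.pow_nonzero; lia).
  pose proof (double_div_pow2_le n k Hn Hn_lt).
  lia.
Qed.
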